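(* Let $R$ be a monad on Sets, $LM$ a left $R$-module with values in Sets, and $CC$ a C-subsystem of $CC(R,LM)$, with $C=Ob(CC)$ and $\widetilde C=\widetilde{Ob}(CC)$. Let $(E_1,\dots,E_m),(T_1,\dots,T_n)\in C$ with $n\ge1$ and $(f_1,\dots,f_n)\in R([m])^n$. Then $(f_1,\dots,f_n)\in\mathrm{Hom}_{CC}((E_1,\dots,E_m),(T_1,\dots,T_n))$ if and only if $(f_1,\dots,f_{n-1})\in\mathrm{Hom}_{CC}((E_1,\dots,E_m),(T_1,\dots,T_{n-1}))$ and $(E_1,\dots,E_m,\,T_n(f_1/1,\dots,f_{n-1}/n-1),\,f_n)\in\widetilde C$.
   Context: Notation: $[n]=\{1,\dots,n\}$. $R$ is a monad on Sets (unit $\eta$, Kleisli extension $\mathrm{bind}$, satisfying the monad laws), $LM$ a left $R$-module (maps $\rho(f):LM(X)\to LM(Y)$ for $f:X\to R(Y)$ with $\rho(\eta_X)=\mathrm{id}$, $\rho(g)\circ\rho(f)=\rho(\mathrm{bind}(g)\circ f)$). Elements of $Y$ are regarded in $R(Y)$ via $\eta_Y$; $E(f_1/1,\dots,f_k/k)$ denotes $\rho(f)(E)$ or $\mathrm{bind}(f)(E)$ with $f(i)=f_i$. $CC(R,LM)$: objects $(T_1,\dots,T_n)$ with $T_i\in LM([i-1])$, $l=n$, $ft$ drops the last entry, $pt=()$; morphisms $(E_1,\dots,E_m)\to(T_1,\dots,T_n)$ are elements of $R([m])^n$, the composite of $f=(f_1,\dots,f_n)$ followed by $g=(g_1,\dots,g_k)$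 is $(g_j(f_1/1,\dots,f_n/n))_j$, identities $(1,\dots,n)$; $p_X=(1,\dots,n):(T_1,\dots,T_{n+1})\to(T_1,\dots,T_n)$; for $X=(T_1,\dots,T_{n+1})$ and $f=(f_1,\dots,f_n):(R_1,\dots,R_m)\to ft(X)$, $f^*X=(R_1,\dots,R_m,T_{n+1}(f_1/1,\dots,f_n/n))$, $q(f,X)=(f_1,\dots,f_n,m+1)$. A C-subsystem is a subcategory $CC$ containing $pt$, such that for every object $X$ of $CC$ with $l(X)>0$: $ft(X),p_X\in CC$; for $f:Y\to ft(X)$ in $CC$, $f^*X,q(f,X)\in CC$; for $f:Y\to X$ in $CC$, the morphism $s_f:Y\to(p_X\circ f)^*X$ with $p\circ s_f=\mathrm{id}$ and $q(p_X\circ f,X)\circ s_f=f$ is in $CC$. $\widetilde{Ob}(CC)$ is the set of morphisms $s:ft(X)\to X$ of $CC$ with $l(X)>0$ and $p_X\circ s=\mathrm{id}$; the section $(1,\dots,k,t):(A_1,\dots,A_k)\to(A_1,\dots,A_k,A)$ is identified with $(A_1,\dots,A_k,A,t)$. *)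

From mathcomp Require Import all_boot.
Set Implicit Arguments. Unset Strict Implicit. Unset Printing Implicit Defensive.

(* Conventions: the finite set [n] = {1,...,n} is modelled by 'I_n, the
   element k : 'I_n standing for k+1.  "Sets" is modelled by Type. *)

Record monad := Monad {
  M :> Type -> Type;
  eta : forall X, X -> M X;
  bind : forall X Y, (X -> M Y) -> M X -> M Y;
  bind_eta : forall X (x : M X), bind (@eta X) x = x;
  bind_etaK : forall X Y (f : X -> M Y) (x : X), bind f (eta x) = f x;
  bind_bind : forall X Y Z (f : X -> M Y) (g : Y -> M Z) (x : M X),
      bind g (bind f x) = bind (fun a => bind g (f a)) x
}.
Arguments eta {m X}.
Arguments bind {m X Y}.

Record lmodule (R : monad) := LModule {
  LM :> Type -> Type;
  rho : forall X Y, (X -> R Y) -> LM X -> LM Y;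
  rho_eta : forall X (E : LM X), rho (@eta R X) E = E;
  rho_comp : forall X Y Z (f : X -> R Y) (g : Y -> R Z) (E : LM X),
      rho g (rho f E) = rho (fun a => bind g (f a)) E
}.
Arguments rho {R l X Y}.

Section CCRLM.
Variables (R : monad) (LM : lmodule R).

(* Objects of CC(R,LM) of length n: (T_1,...,T_n) with T_i in LM([i-1]). *)
Fixpoint obj (n : nat) : Type :=
  match n with 0 => unit | k.+1 => (obj k * LM 'I_k)%type end.

Definition pt : obj 0 := tt.
Definition ft n (X : obj n.+1) : obj n := X.1.
Definition lastT n (X : obj n.+1) : LM 'I_n := X.2.
Definition extend n (X : obj n) (T : LM 'I_n) : obj n.+1 := (X, T).

Definition hom (m n : nat) := n.-tuple (R 'I_m).

(* composite of f : X -> Y followed by g : Y -> Z *)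
Definition comp m n k (f : hom m n) (g : hom n k) : hom m k :=
  [tuple bind (tnth f) (tnth g j) | j < k].

Definition idm n : hom n n := [tuple eta j | j < n].

Definition hfront m n (f : hom m n.+1) : hom m n :=
  [tuple tnth f (widen_ord (leqnSn n) j) | j < n].
Definition hlast m n (f : hom m n.+1) : R 'I_m := tnth f ord_max.
Definition hsnoc m n (f : hom m n) (t : R 'I_m) : hom m n.+1 := rcons_tuple f t.

Definition pmor n : hom n.+1 n := [tuple eta (widen_ord (leqnSn n) j) | j < n].

Definition pullback m n (Y : obj m) (X : obj n.+1) (f : hom m n) : obj m.+1 :=
  extend Y (rho (tnth f) (lastT X)).

Definition Rweak m (a : R 'I_m) : R 'I_m.+1 :=
  bind (fun x : 'I_m => eta (widen_ord (leqnSn m) x)) a.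

Definition qmor m n (f : hom m n) : hom m.+1 n.+1 :=
  hsnoc [tuple Rweak (tnth f j) | j < n] (eta ord_max).

(* s_f = (1,...,m,f_{n+1}) : Y -> (p_X o f)^* X, for f : Y -> X, X : obj n.+1 *)
Definition smor m n (f : hom m n.+1) : hom m m.+1 := hsnoc (idm m) (hlast f).

(* A C-subsystem of CC(R,LM): a subcategory given by predicates on objects
   and on morphisms (with their source and target), with closure properties. *)
Record Csubsystem := {
  isOb : forall n, obj n -> Prop;
  isHom : forall m n, obj m -> obj n -> hom m n -> Prop;
  isHom_ob : forall m n (X : obj m) (Y : obj n) f,
      isHom X Y f -> isOb X /\ isOb Y;
  isHom_id : forall n (X : obj n), isOb X -> isHom X X (idm n);
  isHom_comp : forall m n k (X : obj m) (Y : obj n) (Z : obj k) f g,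
      isHom X Y f -> isHom Y Z g -> isHom X Z (comp f g);
  isOb_pt : isOb pt;
  isOb_ft : forall n (X : obj n.+1), isOb X -> isOb (ft X);
  isHom_p : forall n (X : obj n.+1), isOb X -> isHom X (ft X) (pmor n);
  isOb_pullback : forall m n (Y : obj m) (X : obj n.+1) (f : hom m n),
      isOb X -> isHom Y (ft X) f -> isOb (pullback Y X f);
  isHom_q : forall m n (Y : obj m) (X : obj n.+1) (f : hom m n),
      isOb X -> isHom Y (ft X) f -> isHom (pullback Y X f) X (qmor f);
  isHom_s : forall m n (Y : obj m) (X : obj n.+1) (f : hom m n.+1),
      isOb X -> isHom Y X f ->
      isHom Y (pullback Y X (comp f (pmor n))) (smor f)
}.

Definition tildeOb (CC : Csubsystem) n (X : obj n.+1) (s : hom n n.+1) : Prop :=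
  isOb CC X /\ isHom CC (ft X) X s /\ comp s (pmor n) = idm n.

(* (A_1,...,A_k,A,t) in tilde-C, i.e. the section (1,...,k,t) is in tilde-C *)
Definition inTilde (CC : Csubsystem) k (Xk : obj k) (A : LM 'I_k) (t : R 'I_k) : Prop :=
  tildeOb CC (extend Xk A) (hsnoc (idm k) t).

End CCRLM.

From Pilot Require Import Defs.
From mathcomp Require Import all_boot.
From Stdlib Require Import FunctionalExtensionality.

(* For f : E -> T, the composite p_T o f is the truncation (f_1,...,f_{n-1}),
   and s_f = (1,...,m,f_n) is exactly the section named in the statement, so
   both conditions follow from the closure of CC under composition and s.
   Conversely f = q(f_1..f_{n-1}, T) o s_f, a composite of two morphisms of CC. *)

Section HomIdentities.
Variable R : monad.

Lemma tnth_hsnoc_widen m n (f : hom R m n) t (j : 'I_n) :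
  tnth (hsnoc f t) (widen_ord (leqnSn n) j) = tnth f j.
Proof.
rewrite /hsnoc (tnth_nth (tnth f j)) /= nth_rcons size_tuple ltn_ord.
by rewrite -tnth_nth.
Qed.

Lemma tnth_hsnoc_max m n (f : hom R m n) t : tnth (hsnoc f t) ord_max = t.
Proof. by rewrite /hsnoc (tnth_nth t) /= nth_rcons size_tuple ltnn eqxx. Qed.

Lemma comp_pmor m n (f : hom R m n.+1) : Defs.comp f (pmor R n) = hfront f.
Proof.
apply: eq_from_tnth => j; rewrite /Defs.comp /pmor /hfront !tnth_mktuple.
by rewrite bind_etaK.
Qed.

Lemma section_pmor m (t : R 'I_m) :
  Defs.comp (hsnoc (idm R m) t) (pmor R m) = idm R m.
Proof.
by rewrite comp_pmor; apply: eq_from_tnth => j; rewrite tnth_mktuple tnth_hsnoc_widen.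
Qed.

Lemma smor_qmor m n (f : hom R m n.+1) :
  Defs.comp (smor f) (qmor (hfront f)) = f.
Proof.
apply: eq_from_tnth => j; rewrite /Defs.comp tnth_mktuple.
have [jn|jn] := ltnP j n.
  have -> : j = widen_ord (leqnSn n) (Ordinal jn) by apply: val_inj.
  rewrite /qmor tnth_hsnoc_widen tnth_mktuple /Rweak bind_bind.
  have -> : (fun a : 'I_m => bind (tnth (smor f))
                (eta (widen_ord (leqnSn m) a))) = @eta R _.
    apply: functional_extensionality => a.
    by rewrite bind_etaK tnth_hsnoc_widen tnth_mktuple.
  by rewrite bind_eta /hfront tnth_mktuple.
have -> : j = ord_max by apply/val_inj/eqP; rewrite eqn_leq jn -ltnS ltn_ord.
by rewrite /qmor tnth_hsnoc_max bind_etaK tnth_hsnoc_max.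
Qed.

End HomIdentities.

Section CsubsystemHom.
Variables (R : monad) (LM : lmodule R) (CC : Csubsystem LM).
Variables (m n : nat) (E : obj LM m) (T : obj LM n.+1).
Hypothesis obT : isOb CC T.

Lemma isHom_hfront (f : hom R m n.+1) :
  isHom CC E T f -> isHom CC E (ft T) (hfront f).
Proof. by move=> homf; rewrite -comp_pmor; apply: isHom_comp homf (isHom_p obT). Qed.

Lemma inTilde_smor (f : hom R m n.+1) :
  isHom CC E T f -> inTilde CC E (rho (tnth (hfront f)) (lastT T)) (hlast f).
Proof.
move=> homf; have hom_s := isHom_s obT homf; rewrite comp_pmor in hom_s.
split; first by case: (isHom_ob hom_s).
by split; [exact: hom_s | exact: section_pmor].
Qed.

Lemma isHom_of_section (f : hom R m n.+1) :
  isHom CC E (ft T) (hfront f) ->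
  inTilde CC E (rho (tnth (hfront f)) (lastT T)) (hlast f) ->
  isHom CC E T f.
Proof.
move=> homf' [_ [hom_s _]]; rewrite -[f]smor_qmor.
exact: isHom_comp hom_s (isHom_q obT homf').
Qed.

End CsubsystemHom.

Theorem lemma4p3 (R : monad) (LM : lmodule R) (CC : Csubsystem LM)
  (m n : nat) (E : obj LM m) (T : obj LM n.+1) (f : hom R m n.+1) :
  isOb CC E -> isOb CC T ->
  (isHom CC E T f <->
   (isHom CC E (ft T) (hfront f) /\
    inTilde CC E (rho (tnth (hfront f)) (lastT T)) (hlast f))).
Proof.
move=> _ obT; split.
  by move=> homf; split; [exact: isHom_hfront | exact: inTilde_smor].
by case; apply: isHom_of_section.
Qed.
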